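(* For $\theta\in(0,1)$ let $P_\theta$ be the geometric distribution $p_\theta(i)=(1-\theta)\theta^i$, $i\ge 0$, and let $N_\theta^{**}$ be the lengths of a binary prefix code minimizing the maximal pointwise redundancy $R^*(N,P_\theta)=\sup_{i\ge 0}[n(i)+\log_2 p_\theta(i)]$. Then $$\liminf_{\theta\uparrow1}R^*(N_\theta^{**},P_\theta)=1-\log_2\log_2 e,\qquad \limsup_{\theta\uparrow1}R^*(N_\theta^{**},P_\theta)=2-\log_2 e,$$ where $e$ is the base of the natural logarithm.
   Context: A binary prefix code for the nonnegative integers assigns to each $i\ge0$ a codeword in $\{0,1\}^*$ such that no codeword is a prefix of another; $n(i)$ is the length of the codeword for $i$ and $N=\{n(i)\}$. *)

From HB Require Import structures.
From mathcomp Require Import all_boot all_order all_algebra.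
From mathcomp Require Import all_classical all_reals all_analysis.
Set Implicit Arguments. Unset Strict Implicit. Unset Printing Implicit Defensive.
Import Order.TTheory GRing.Theory Num.Theory.
Import numFieldNormedType.Exports.
Local Open Scope classical_set_scope.
Local Open Scope ring_scope.

Definition log2 {R : realType} (x : R) : R := ln x / ln 2.

Definition is_prefix_code (c : nat -> seq bool) : Prop :=
  forall i j : nat, i <> j -> ~~ prefix (c i) (c j).

Definition prefix_code_lengths (N : nat -> nat) : Prop :=
  exists c : nat -> seq bool, is_prefix_code c /\ forall i, size (c i) = N i.

Definition geom {R : realType} (theta : R) (i : nat) : R := (1 - theta) * theta ^+ i.

Definition Rstar {R : realType} (N : nat -> nat) (p : nat -> R) : \bar R :=
  ereal_sup (range (fun i : nat => ((N i)%:R + log2 (p i))%:E)).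

Definition minimax_code {R : realType} (theta : R) (N : nat -> nat) : Prop :=
  prefix_code_lengths N /\
  forall N', prefix_code_lengths N' -> (Rstar N (geom theta) <= Rstar N' (geom theta))%E.

From HB Require Import structures.
From mathcomp Require Import all_boot all_order all_algebra.
From mathcomp Require Import all_classical all_reals all_analysis.
From mathcomp Require Import zify ring lra.
Import Order.TTheory GRing.Theory Num.Theory.
Import numFieldNormedType.Exports.
Local Open Scope classical_set_scope.
Local Open Scope ring_scope.

(* Write a := -log2 theta and b := -log2 (1 - theta), so that -log2 p_theta(i) = b + i a.
   Lengths have redundancy at most r iff n(i) <= floor(r + b + i a) for all i, so by Kraft's
   inequality and its converse for nondecreasing lengths (the canonical code), the optimal
   redundancy is the least r such that sum_i 2^-floor(r + b + i a) <= 1; the infimum is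
   attained because floor is right continuous.
   The potential G(y) := 2^-floor(y) (2 - frac y) satisfies
   a 2^-floor(y) <= G(y - a) - G(y) <= a 2^-floor(y - a), so by telescoping the Kraft
   condition at c = r + b forces G(c) <= a and follows from G(c - a) <= a. Combined with
   -log2 (a ln 2) <= b <= a - log2 (a ln 2), this pins the optimal redundancy between
   1 + log2 (ln 2) - a and 2 - 1 / ln 2 + a, and these bounds are approached along
   a = 2^-k and a = 2^-k / ln 2 respectively. *)

Set Implicit Arguments.
Unset Strict Implicit.
Unset Printing Implicit Defensive.

Section Kraft.
Context {R : realType}.

Lemma kraft_empty_word (c : nat -> seq bool) (I : seq nat) i0 :
  uniq I -> {in I &, forall i j, i <> j -> ~~ prefix (c i) (c j)} ->
  i0 \in I -> c i0 = [::] -> \sum_(i <- I) (2^-1 : R) ^+ size (c i) = 1.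
Proof.
move=> uI pfI i0I ci0; rewrite (bigD1_seq i0) //= ci0 expr0 big1_seq ?addr0 //.
move=> i /andP[/eqP ne iI]; have := pfI i0 i i0I iI (nesym ne).
by rewrite ci0 prefix0s.
Qed.

Lemma kraft_bounded (L : nat) (c : nat -> seq bool) (I : seq nat) :
  uniq I -> {in I &, forall i j, i <> j -> ~~ prefix (c i) (c j)} ->
  {in I, forall i, size (c i) <= L}%N ->
  \sum_(i <- I) (2^-1 : R) ^+ size (c i) <= 1.
Proof.
elim: L c I => [|L IH] c I uI pfI szI.
  case: I uI pfI szI => [|i0 I] uI pfI szI; first by rewrite big_nil.
  rewrite (kraft_empty_word uI pfI (mem_head i0 I)) //.
  by apply/nilP; rewrite /nilp -leqn0 szI ?mem_head.
have [/hasP[i0 i0I /eqP ci0]|/hasPn nonempty] := boolP (has (fun i => c i == [::]) I).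
  by rewrite (kraft_empty_word uI pfI i0I ci0).
have cE i : i \in I -> c i = head false (c i) :: behead (c i).
  by move=> iI; case: (c i) (nonempty i iI).
have half b : \sum_(i <- I | head false (c i) == b) (2^-1 : R) ^+ size (c i) <= 2^-1.
  rewrite -big_filter big_seq.
  under eq_bigr => i /[!mem_filter] /andP[_ iI] do rewrite [c i](cE i iI) /= exprS.
  rewrite -big_seq -mulr_sumr ler_piMr // IH ?filter_uniq //.
    move=> i j /[!mem_filter] /andP[/eqP hi iI] /andP[/eqP hj jI] ij.
    by have := pfI i j iI jI ij; rewrite (cE i iI) (cE j jI) hi hj /= eqxx.
  move=> i /[!mem_filter] /andP[_ iI]; rewrite size_behead.
  by have := szI i iI; case: (size (c i)).
rewrite (bigID (fun i => head false (c i) == true)) /= [leRHS](splitr 1) mul1r.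
apply: lerD; first exact: half.
by under eq_bigl do rewrite eqb_id -eqbF_neg; apply: half.
Qed.

Lemma kraft (N : nat -> nat) : prefix_code_lengths N ->
  forall m, \sum_(i < m) (2^-1 : R) ^+ N i <= 1.
Proof.
move=> [c [pc sz]] m; rewrite -(big_mkord xpredT (fun i => (2^-1 : R) ^+ N i)).
under eq_bigr do rewrite -sz.
apply: (kraft_bounded (L := \sum_(j <- index_iota 0 m) size (c j))); first exact: iota_uniq.
  by move=> i j _ _; apply: pc.
by move=> i iI; rewrite (bigD1_seq i iI) ?leq_addr ?iota_uniq.
Qed.

End Kraft.

Fixpoint bin (n k : nat) : seq bool :=
  if n is n'.+1 then rcons (bin n' k./2) (odd k) else [::].

Lemma size_bin n k : size (bin n k) = n.
Proof. by elim: n k => [|n IH] k //=; rewrite size_rcons IH. Qed.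

Lemma bin_add m d k : bin (m + d) k = bin m (k %/ 2 ^ d) ++ bin d k.
Proof.
elim: d k => [|d IH] k; first by rewrite addn0 expn0 divn1 cats0.
by rewrite addnS /= IH -rcons_cat expnS divnMA divn2.
Qed.

Lemma bin_inj n x y : (x < 2 ^ n)%N -> (y < 2 ^ n)%N -> bin n x = bin n y -> x = y.
Proof.
elim: n x y => [|n IH] x y; first by rewrite expn0 !ltnS !leqn0 => /eqP-> /eqP->.
rewrite expnSr -!ltn_divLR // !divn2 => hx hy /rcons_inj[/(IH _ _ hx hy) e eo].
by rewrite -(odd_double_half x) -(odd_double_half y) e eo.
Qed.

Section CanonicalCode.
Context {R : realType}.
Variable n : nat -> nat.
Hypothesis n_homo : {homo n : i j / (i <= j)%N}.
Hypothesis n_kraft : forall m, \sum_(i < m) (2^-1 : R) ^+ n i <= 1.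

Fixpoint offset (i : nat) : nat :=
  if i is i'.+1 then ((offset i').+1 * 2 ^ (n i'.+1 - n i'))%N else 0%N.

Lemma offsetE i : (offset i)%:R * (2^-1 : R) ^+ n i = \sum_(l < i) (2^-1 : R) ^+ n l.
Proof.
elim: i => [|i IH]; first by rewrite big_ord0 mul0r.
rewrite big_ord_recr /= -IH natrM natrX -natr1 -mulrA.
suff -> : 2 ^+ (n i.+1 - n i) * 2^-1 ^+ n i.+1 = (2^-1 : R) ^+ n i by rewrite mulrDl mul1r.
by rewrite -{2}(subnKC (n_homo (leqnSn i))) exprD mulrCA -exprMn divff ?expr1n ?mulr1.
Qed.

Lemma offset_lt i : (offset i < 2 ^ n i)%N.
Proof.
have := n_kraft i.+1; rewrite big_ord_recr /= -offsetE -{2}[_ ^+ n i]mul1r -mulrDl.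
by rewrite exprVn ler_pdivrMr ?exprn_gt0 // mul1r -natrX natr1 ler_nat.
Qed.

Lemma offset_grow i j : (i < j)%N -> ((offset i).+1 * 2 ^ (n j - n i) <= offset j)%N.
Proof.
elim: j => [//|j IH]; rewrite ltnS leq_eqVlt => /orP[/eqP-> //|lt_ij].
have le_ij : (n i <= n j)%N by apply/n_homo/ltnW.
have le_jSj : (n j <= n j.+1)%N by apply: n_homo.
have -> : (n j.+1 - n i = (n j - n i) + (n j.+1 - n j))%N by lia.
by rewrite /= expnD mulnA leq_mul // (leq_trans (IH lt_ij)).
Qed.

Definition canonical_code i := bin (n i) (offset i).

Lemma canonical_code_lt i j : (i < j)%N -> ~~ prefix (canonical_code i) (canonical_code j).
Proof.
move=> lt_ij; have le_ij : (n i <= n j)%N by apply/n_homo/ltnW.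
rewrite /canonical_code -(subnKC le_ij) bin_add prefixE size_bin take_size_cat ?size_bin //.
apply/negP => /eqP/bin_inj e.
have lt_div : (offset j %/ 2 ^ (n j - n i) < 2 ^ n i)%N.
  by rewrite ltn_divLR ?expn_gt0 // -expnD subnKC // offset_lt.
have := offset_grow lt_ij; rewrite -leq_divRL ?expn_gt0 // -(e lt_div (offset_lt i)).
by rewrite ltnn.
Qed.

Lemma canonical_code_prefix : is_prefix_code canonical_code.
Proof.
move=> i j ne; case: (ltngtP i j) => [|gt_ij|eq_ij]; first exact: canonical_code_lt.
- apply/negP => pij; have := size_prefix pij; rewrite !size_bin => le_ij.
  have e : n i = n j by apply/eqP; rewrite eqn_leq le_ij n_homo // ltnW.
  move: pij; rewrite prefixE /canonical_code e take_oversize ?size_bin // => /eqP eij.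
  by have := canonical_code_lt gt_ij; rewrite /canonical_code e eij prefix_refl.
- by move: ne; rewrite eq_ij.
Qed.

Lemma kraft_converse : prefix_code_lengths n.
Proof.
by exists canonical_code; split; [exact: canonical_code_prefix | move=> i; rewrite size_bin].
Qed.

End CanonicalCode.

Section Pow2.
Context {R : realType}.
Implicit Types x y : R.

Lemma ln2_gt0 : 0 < ln (2 : R).
Proof. by apply: ln_gt0; rewrite ltr1n. Qed.

Lemma pow2E x : 2 `^ x = expR (x * ln 2).
Proof. by rewrite /powR pnatr_eq0. Qed.

Lemma pow2_gt0 x : 0 < 2 `^ x.
Proof. by rewrite pow2E expR_gt0. Qed.

Lemma ler_pow2 : {mono powR (2 : R) : x y / x <= y}.
Proof. by move=> x y; rewrite !pow2E ler_expR ler_pM2r // ln2_gt0. Qed.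

Lemma ltr_pow2 : {mono powR (2 : R) : x y / x < y}.
Proof. by move=> x y; rewrite !pow2E ltr_expR ltr_pM2r // ln2_gt0. Qed.

Lemma pow2D x y : 2 `^ (x + y) = 2 `^ x * 2 `^ y.
Proof. by rewrite !pow2E mulrDl expRD. Qed.

Lemma pow2M_natl (k : nat) x : 2 `^ (k%:R * x) = 2 `^ x ^+ k.
Proof. by rewrite !pow2E -mulrA expRM_natl. Qed.

Lemma pow2_natN (k : nat) : 2 `^ (- k%:R) = 2^-1 ^+ k :> R.
Proof. by rewrite powR_invn // exprVn. Qed.

Lemma log2_pow2 x : log2 (2 `^ x) = x.
Proof. by rewrite /log2 ln_powR mulfK // gt_eqF // ln2_gt0. Qed.

Lemma pow2_log2 x : 0 < x -> 2 `^ log2 x = x.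
Proof.
by move=> x0; rewrite pow2E /log2 divfK ?lnK ?(gt_eqF ln2_gt0).
Qed.

Lemma pow2_le_2B (f : R) : 0 <= f <= 1 -> 2 `^ (1 - f) <= 2 - f.
Proof.
case/andP=> f0 f1; rewrite -ler_ln ?posrE ?pow2_gt0 ?subr_gt0 ?(le_lt_trans f1) ?ltr1n //.
have := concave_ln (Itv01 (eqbRL (subr_ge0 _ _) f1) (eqbRL (gerBl _ _) f0)) (ltr0Sn R 1) ltr01.
rewrite !convRE /= /unstable.onem ln1 mulr0 addr0 ln_powR.
by have -> : (1 - f) * 2 + (1 - (1 - f)) * 1 = 2 - f by ring.
Qed.

End Pow2.

Lemma exists_expr_lt {R : realType} (q e : R) : 0 <= q < 1 -> 0 < e -> exists m, q ^+ m < e.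
Proof.
move=> /andP[q0 q1] e0; have q_lt1 : `|q| < 1 by rewrite ger0_norm.
have [m _ lt_e] := cvgr_lt _ (cvg_expr q_lt1) _ e0.
by exists m; apply: lt_e => /=.
Qed.

Lemma sum_telescope (V : zmodType) (u : nat -> V) m :
  \sum_(i < m) (u i - u i.+1) = u 0%N - u m.
Proof.
rewrite -(big_mkord xpredT (fun i => u i - u i.+1)) -opprB -telescope_sumr // -sumrN.
by apply: eq_bigr => i _; rewrite opprB.
Qed.

Section Redundancy.
Context {R : realType}.
Implicit Types (th r c a y : R) (N : nat -> nat).

Definition step th := - log2 th.
Definition info0 th := - log2 (1 - th).
Definition info th (i : nat) := info0 th + i%:R * step th.

Lemma geom_gt0 th i : 0 < th < 1 -> 0 < geom th i.
Proof. by case/andP=> th0 th1; rewrite mulr_gt0 ?exprn_gt0 ?subr_gt0. Qed.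

Lemma log2_geom th i : 0 < th < 1 -> log2 (geom th i) = - info th i.
Proof.
case/andP=> th0 th1; rewrite /info /info0 /step /log2 /geom.
rewrite lnM ?posrE ?subr_gt0 ?exprn_gt0 // lnXn //.
by rewrite mulrDl opprD mulrN !opprK mulrnAl mulr_natl.
Qed.

Lemma step_gt0 th : 0 < th < 1 -> 0 < step th.
Proof.
case/andP=> th0 th1; rewrite /step /log2 -mulNr divr_gt0 ?ln2_gt0 // oppr_gt0.
by rewrite ln_lt0 // th0.
Qed.

Lemma info_homo th : 0 < th < 1 -> {homo info th : i j / (i <= j)%N >-> i <= j}.
Proof. by move=> th01 i j ij; rewrite lerD2l ler_pM2r ?step_gt0 // ler_nat. Qed.

Lemma Rstar_leP th N r : 0 < th < 1 ->
  (Rstar N (geom th) <= r%:E)%E <-> forall i, (N i)%:R <= r + info th i.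
Proof.
move=> th01; split => [le_r i | le_r].
  rewrite -lerBlDr -lee_fin -log2_geom //; apply: le_trans le_r.
  by apply: ereal_sup_ubound; exists i.
by apply: ge_ereal_sup => _ [i _ <-]; rewrite lee_fin log2_geom // lerBlDr.
Qed.

Definition weight y := 2 `^ (- Rfloor y).

Definition kraft_admissible c a := forall m, \sum_(i < m) weight (c + i%:R * a) <= 1.

Definition optR th := inf [set r | kraft_admissible (r + info0 th) (step th)].

Lemma weightE y : 0 <= Num.floor y -> weight y = 2^-1 ^+ `|Num.floor y|%N.
Proof. by move=> y0; rewrite /weight -pow2_natN RfloorE natr_absz ger0_norm. Qed.

Lemma admissible_floor_ge0 c a : kraft_admissible c a -> 0 <= Num.floor c.
Proof.
move=> adm; have := adm 1%N; rewrite big_ord1 mul0r addr0 /weight -[leRHS](powRr0 2).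
by rewrite ler_pow2 oppr_le0 RfloorE ler0z.
Qed.

Lemma admissible_of_code th N r : 0 < th < 1 -> prefix_code_lengths N ->
  (Rstar N (geom th) <= r%:E)%E -> kraft_admissible (r + info0 th) (step th).
Proof.
move=> th01 pN /(Rstar_leP _ _ th01) le_r m; apply: le_trans (kraft pN m).
apply: ler_sum => i _; rewrite -addrA -/(info th i) /weight -pow2_natN ler_pow2 lerN2.
by rewrite -[(N i)%:R]/(((N i)%:Z)%:~R : R) -Rfloor_ge_int le_r.
Qed.

Lemma code_of_admissible th r : 0 < th < 1 -> kraft_admissible (r + info0 th) (step th) ->
  exists N, prefix_code_lengths N /\ (Rstar N (geom th) <= r%:E)%E.
Proof.
move=> th01 adm; pose z i := Num.floor (r + info th i).
have z_homo : {homo z : i j / (i <= j)%N >-> i <= j}.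
  by move=> i j ij; apply: le_floor; rewrite lerD2l info_homo.
have z_ge0 i : 0 <= z i.
  by apply: le_trans (z_homo _ _ (leq0n i)); have := admissible_floor_ge0 adm;
    rewrite /z /info mul0r addr0.
exists (fun i => `|z i|%N); split.
  apply: (kraft_converse (R := R)) => [i j ij | m]; first by rewrite -lez_nat !gez0_abs ?z_homo.
  rewrite (eq_bigr (fun i : 'I_m => weight (r + info0 th + i%:R * step th))) ?adm //.
  by move=> i _; rewrite -(weightE (z_ge0 i)) addrA.
by apply/Rstar_leP => // i; rewrite natr_absz ger0_norm // floor_le.
Qed.

Lemma sum_geom_le1 th m : 0 < th < 1 -> \sum_(i < m) geom th i <= 1.
Proof.
case/andP=> th0 th1; rewrite -mulr_sumr -opprB mulNr -subrX1 opprB.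
by rewrite gerBl exprn_ge0 // ltW.
Qed.

Lemma admissible1 th : 0 < th < 1 -> kraft_admissible (1 + info0 th) (step th).
Proof.
move=> th01 m; apply: le_trans (sum_geom_le1 m th01); apply: ler_sum => i _.
rewrite -addrA -/(info th i) -(pow2_log2 (geom_gt0 i th01)) log2_geom //.
rewrite /weight ler_pow2 lerN2; have := lt_succ_Rfloor (1 + info th i); lra.
Qed.

Lemma admissible_ge th r : kraft_admissible (r + info0 th) (step th) -> - info0 th <= r.
Proof. by move/admissible_floor_ge0; rewrite floor_ge0 -lerBlDr sub0r. Qed.

Lemma Rfloor_right_stable (x : nat -> R) m : exists2 d, 0 < d &
  forall i, (i < m)%N -> forall y, x i <= y < x i + d -> Rfloor y = Rfloor (x i).
Proof.
elim: m => [|m [d d0 stable]]; first by exists 1.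
exists (Num.min d (Rfloor (x m) + 1 - x m)).
  by rewrite lt_min d0 subr_gt0 lt_succ_Rfloor.
move=> i; rewrite ltnS leq_eqVlt => /orP[/eqP-> | lt_im] y /andP[le_y lt_y].
  have min_le : Num.min d (Rfloor (x m) + 1 - x m) <= Rfloor (x m) + 1 - x m.
    by rewrite ge_min lexx orbT.
  rewrite !RfloorE (@floor_def _ _ (Num.floor (x m))) // intrD -RfloorE -[1%:~R]/(1 : R).
  by have := Rfloor_le (x m); lra.
apply: stable => //; rewrite le_y; apply: (lt_le_trans lt_y).
by rewrite lerD2l ge_min lexx.
Qed.

Lemma admissible_has_lbound th :
  has_lbound [set r | kraft_admissible (r + info0 th) (step th)].
Proof. by exists (- info0 th) => r /admissible_ge. Qed.

Lemma optR_le th r : kraft_admissible (r + info0 th) (step th) -> optR th <= r.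
Proof. by move=> adm; apply: (ge_inf (admissible_has_lbound th)). Qed.

Lemma optR_admissible th : 0 < th < 1 -> kraft_admissible (optR th + info0 th) (step th).
Proof.
move=> th01 m; have [d d0 stable] := Rfloor_right_stable (fun i => optR th + info th i) m.
have [r adm_r lt_r] : exists2 r, kraft_admissible (r + info0 th) (step th) & r < optR th + d.
  apply: inf_adherent => //; split; last exact: admissible_has_lbound.
  by exists 1; apply: admissible1.
rewrite (eq_bigr (fun i : 'I_m => weight (r + info0 th + i%:R * step th))) ?adm_r // => i _.
rewrite -!addrA -/(info th i) /weight (stable i (ltn_ord i) (r + info th i)) //.
by rewrite lerD2r optR_le //= addrAC ltrD2r.
Qed.

Lemma optR_le_Rstar th N : 0 < th < 1 -> prefix_code_lengths N ->
  ((optR th)%:E <= Rstar N (geom th))%E.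
Proof.
move=> th01 pN; case E: (Rstar N (geom th)) => [r| |]; rewrite ?leey //.
  by rewrite lee_fin; apply/optR_le/(admissible_of_code th01 pN); rewrite E.
have adm : kraft_admissible (optR th - 1 + info0 th) (step th).
  by apply: (admissible_of_code th01 pN); rewrite E leNye.
by exfalso; have := optR_le adm; lra.
Qed.

Lemma minimax_code_exists th : 0 < th < 1 -> exists N, minimax_code th N.
Proof.
move=> th01; have [N [pN le_N]] := code_of_admissible th01 (optR_admissible th01).
by exists N; split => // N' pN'; apply: le_trans le_N (optR_le_Rstar th01 pN').
Qed.

Lemma minimax_codeE th N : 0 < th < 1 -> minimax_code th N ->
  Rstar N (geom th) = (optR th)%:E.
Proof.
move=> th01 [pN minN]; apply/eqP; rewrite eq_le optR_le_Rstar // andbT.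
have [N0 [pN0 le_N0]] := code_of_admissible th01 (optR_admissible th01).
exact: le_trans (minN N0 pN0) le_N0.
Qed.

End Redundancy.

Section Potential.
Context {R : realType}.
Implicit Types (a c y : R).

(* [potential y] is the integral of [weight] over [y, +oo). *)
Definition potential y := weight y * (2 - (y - Rfloor y)).

Lemma potential_gt0 y : 0 < potential y.
Proof.
by rewrite /potential mulr_gt0 ?pow2_gt0 //; have := lt_succ_Rfloor y; have := Rfloor_le y; lra.
Qed.

Lemma potential_le_weight y : potential y <= 2 * weight y.
Proof.
rewrite /potential mulrC ler_pM2r ?pow2_gt0 //.
by have := Rfloor_le y; lra.
Qed.

Lemma weight_le y : weight y <= 2 `^ (1 - y).
Proof. by rewrite /weight ler_pow2; have := lt_succ_Rfloor y; lra. Qed.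

Lemma potential_step a y : 0 < a <= 1 ->
  a * weight y <= potential (y - a) - potential y <= a * weight (y - a).
Proof.
case/andP=> a0 a1; have fl_y := Rfloor_le y; have fl_y1 := lt_succ_Rfloor y.
have fl_ya := Rfloor_le (y - a); have fl_ya1 := lt_succ_Rfloor (y - a).
have [e|e] : Rfloor (y - a) = Rfloor y \/ Rfloor (y - a) = Rfloor y - 1.
  have lb : (Num.floor y - 1 <= Num.floor (y - a))%R.
    by rewrite floor_ge_int intrB -[1%:~R]/(1 : R); have := floor_le y; lra.
  have ub : (Num.floor (y - a) <= Num.floor y)%R by apply: le_floor; lra.
  rewrite !RfloorE -[1]/(1%:~R : R) -intrB.
  have [->|->] : (Num.floor (y - a) = Num.floor y \/ Num.floor (y - a) = Num.floor y - 1)%R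
    by lia.
    by left.
  by right.
- rewrite /potential /weight e; set w := 2 `^ _.
  have -> : w * (2 - (y - a - Rfloor y)) - w * (2 - (y - Rfloor y)) = a * w by ring.
  by rewrite lexx.
- rewrite /potential /weight e opprB pow2D powRr1 // -/(weight y); rewrite e in fl_ya1.
  have w0 : 0 < weight y by apply: pow2_gt0.
  have -> : 2 * weight y * (2 - (y - a + (1 - Rfloor y))) - weight y * (2 - (y - Rfloor y))
      = weight y * (2 * a - (y - Rfloor y)) by ring.
  by apply/andP; split; nra.
Qed.

Lemma potential_int_add (k : int) f : 0 <= f < 1 ->
  potential (k%:~R + f) = 2 `^ (- k%:~R) * (2 - f).
Proof.
move=> f01; have fl : Rfloor (k%:~R + f) = k%:~R.
  by apply/range1zP; rewrite /range1 /= lerDl ltrD2l.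
by rewrite /potential /weight fl (addrC _ f) addrK.
Qed.

Lemma potential_ge c : 2 `^ (1 - c) <= potential c.
Proof.
have -> : 1 - c = - Rfloor c + (1 - (c - Rfloor c)) by ring.
rewrite pow2D ler_pM2l ?pow2_gt0 // pow2_le_2B //.
by have := Rfloor_le c; have := lt_succ_Rfloor c; lra.
Qed.

Lemma potential_le_scale (k : int) t c : 1 <= t < 2 -> potential c <= 2 `^ (- k%:~R) * t ->
  k%:~R + 2 - t <= c.
Proof.
move=> t12 le_t; have fl_c := Rfloor_le c; have fl_c1 := lt_succ_Rfloor c.
have [J EJ] : exists J : int, Rfloor c = J%:~R by exists (Num.floor c); rewrite RfloorE.
have w0 := pow2_gt0 (- k%:~R : R).
have [lt_Jk|[eq_Jk|lt_kJ]] : (J <= k - 1 \/ J = k \/ k + 1 <= J)%R by lia.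
- have : 2 `^ (- k%:~R) * 2 <= weight c.
    rewrite mulrC -[X in X * _]powRr1 // -pow2D /weight ler_pow2 EJ.
    by move: lt_Jk; rewrite -(ler_int R) intrB; lra.
  by move: le_t; rewrite /potential; nra.
- by move: le_t; rewrite /potential /weight EJ eq_Jk ler_pM2l //; lra.
- by move: lt_kJ; rewrite -(ler_int R) intrD; lra.
Qed.

Lemma potential_le_of_admissible a c : 0 < a <= 1 -> kraft_admissible c a -> potential c <= a.
Proof.
move=> a01 adm; have /andP[a0 _] := a01; pose u i := potential (c + i%:R * a).
have u_step i : u i - u i.+1 <= a * weight (c + i%:R * a).
  have := potential_step (c + i.+1%:R * a) a01; rewrite /u.
  have -> : c + i.+1%:R * a - a = c + i%:R * a by rewrite -natr1; ring.
  by case/andP.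
have q01 : 0 <= 2 `^ (- a) < 1.
  by rewrite ltW ?pow2_gt0 //= -[X in _ < X](powRr0 2) ltr_pow2 oppr_lt0.
have C0 : 0 < 2 * 2 `^ (1 - c) by rewrite mulr_gt0 ?pow2_gt0.
have u_le m : potential c <= a + 2 * 2 `^ (1 - c) * 2 `^ (- a) ^+ m.
  have tel := sum_telescope u m.
  have : \sum_(i < m) (u i - u i.+1) <= a.
    apply: le_trans (ler_piMr (ltW a0) (adm m)).
    by rewrite mulr_sumr; apply: ler_sum => i _; apply: u_step.
  have : u m <= 2 * 2 `^ (1 - c) * 2 `^ (- a) ^+ m.
    apply: le_trans (potential_le_weight _) _; rewrite -mulrA ler_pM2l // -pow2M_natl -pow2D.
    by apply: le_trans (weight_le _) _; rewrite ler_pow2 mulrN; lra.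
  by rewrite tel /u mul0r addr0; lra.
rewrite leNgt; apply/negP => lt_a.
have [m] := exists_expr_lt q01 (divr_gt0 (eqbRL (subr_gt0 _ _) lt_a) C0).
by rewrite ltr_pdivlMr // => lt_m; have := u_le m; lra.
Qed.

Lemma admissible_of_potential_le a c : 0 < a <= 1 -> potential (c - a) <= a -> kraft_admissible c a.
Proof.
move=> a01 le_a m; have /andP[a0 _] := a01; pose v i := potential (c + i%:R * a - a).
have v_step i : a * weight (c + i%:R * a) <= v i - v i.+1.
  have := potential_step (c + i%:R * a) a01; rewrite /v.
  have -> : c + i.+1%:R * a - a = c + i%:R * a by rewrite -natr1; ring.
  by case/andP.
have tel_le : a * \sum_(i < m) weight (c + i%:R * a) <= v 0%N - v m.
  by rewrite -sum_telescope mulr_sumr; apply: ler_sum => i _; apply: v_step.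
rewrite /v mul0r addr0 in tel_le; rewrite -(ler_pM2l a0) mulr1.
by have := potential_gt0 (c + m%:R * a - a); lra.
Qed.

End Potential.

Section Bounds.
Context {R : realType}.
Implicit Types (th x y : R).

Lemma ln2_lt1 : ln (2 : R) < 1.
Proof.
rewrite -[ltRHS](expRK 1) ltr_ln ?posrE ?expR_gt0 //.
by have := @expR_gt1Dx R 1 (oner_neq0 _); rewrite (_ : 1 + 1 = 2).
Qed.

Lemma ln2_gt_half : 2^-1 < ln (2 : R).
Proof.
have h : 1 - 2^-1 < expR (- 2^-1 : R) by apply: expR_gt1Dx; rewrite oppr_eq0 invr_eq0.
have : expR (2^-1 : R) < 2.
  rewrite -[expR _]invrK -expRN invf_plt ?posrE ?expR_gt0 //.
  by apply: le_lt_trans h; lra.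
by rewrite -[X in _ < X -> _](@lnK R 2) ?posrE // ltr_expR.
Qed.

Lemma ler_log2 : {in Num.pos &, {mono (@log2 R) : x y / x <= y}}.
Proof. by move=> x y x0 y0; rewrite /log2 ler_pM2r ?invr_gt0 ?ln2_gt0 // ler_ln. Qed.

Lemma log2M : {in Num.pos &, {morph (@log2 R) : x y / x * y >-> x + y}}.
Proof. by move=> x y x0 y0; rewrite /log2 lnM // mulrDl. Qed.

Lemma log2_2 : log2 (2 : R) = 1.
Proof. by rewrite /log2 divff // gt_eqF // ln2_gt0. Qed.

Lemma log2_expR1 : log2 (expR 1 : R) = (ln 2)^-1.
Proof. by rewrite /log2 expRK mul1r. Qed.

Lemma ln_le_subr1 x : 0 < x -> ln x <= x - 1.
Proof. by move=> x0; have := @le_ln1Dx R (x - 1); rewrite [1 + _]addrC subrK; apply; lra. Qed.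

Lemma log2_mul_ln2_le x : 0 < x -> log2 (x * ln 2) - x <= - (ln 2)^-1.
Proof.
move=> x0; have l2 := @ln2_gt0 R.
have := ln_le_subr1 (mulr_gt0 x0 l2) => le_x.
rewrite -(ler_pM2r l2) mulrBl /log2 divfK ?gt_eqF // mulNr mulVf ?gt_eqF //; lra.
Qed.

Lemma step_ln2 th : step th * ln 2 = - ln th.
Proof. by rewrite /step /log2 mulNr divfK // gt_eqF // ln2_gt0. Qed.

Lemma info0_ge th : 0 < th < 1 -> - log2 (step th * ln 2) <= info0 th.
Proof.
case/andP=> th0 th1; have le_th := ln_le_subr1 th0.
by rewrite step_ln2 /info0 lerN2 ler_log2 ?posrE; lra.
Qed.

Lemma info0_le th : 0 < th < 1 -> info0 th <= step th - log2 (step th * ln 2).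
Proof.
case/andP=> th0 th1; have := @ln_le_subr1 th^-1; rewrite invr_gt0 lnV ?posrE // => /(_ th0) le_th.
have lnth : 0 < - ln th by rewrite oppr_gt0 ln_lt0 // th0.
rewrite step_ln2 /info0 /step -opprD lerN2 -log2M ?posrE //.
rewrite ler_log2 ?posrE ?mulr_gt0 ?subr_gt0 //.
by rewrite -(ler_pM2l th0) mulrBr mulfV ?gt_eqF // mulr1 in le_th.
Qed.

Lemma log2_potential_ge (c a : R) : 0 < a -> potential c <= a -> 1 - c <= log2 a.
Proof.
move=> a0 le_a; rewrite -[leLHS]log2_pow2 ler_log2 ?posrE ?pow2_gt0 //.
exact: le_trans (potential_ge c) le_a.
Qed.

Lemma optR_ge th : 0 < th < 1 -> step th <= 1 -> 1 + log2 (ln 2) - step th <= optR th.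
Proof.
move=> th01 a1; have a0 := step_gt0 th01; have a01 : 0 < step th <= 1 by rewrite a0.
have := log2_potential_ge a0 (potential_le_of_admissible a01 (optR_admissible th01)).
have := info0_le th01; rewrite log2M ?posrE ?ln2_gt0 //; lra.
Qed.

Lemma optR_le_scale th (k : int) (s : R) : 0 < th < 1 -> step th <= 1 -> 1 < s <= 2 ->
  step th * 2 `^ k%:~R = s -> optR th <= 2 + step th + log2 (s * ln 2) - s.
Proof.
move=> th01 a1 s12 Es; have a0 := step_gt0 th01; have s0 : 0 < s by lra.
have a01 : 0 < step th <= 1 by rewrite a0.
have le_a : potential (k%:~R + (2 - s) + step th - step th) <= step th.
  rewrite addrK potential_int_add; last by lra.
  by rewrite (_ : 2 - (2 - s) = s) ?subKr // -Es mulrCA -pow2D addNr powRr0 mulr1.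
have := optR_le (th := th) (r := k%:~R + (2 - s) + step th - info0 th).
rewrite subrK => /(_ (admissible_of_potential_le a01 le_a)).
have : log2 s = log2 (step th) + k%:~R by rewrite -Es log2M ?posrE ?pow2_gt0 // log2_pow2.
have := info0_ge th01; rewrite !log2M ?posrE ?ln2_gt0 //; lra.
Qed.

Lemma optR_le_upper th : 0 < th < 1 -> step th <= 1 -> optR th <= 2 - (ln 2)^-1 + step th.
Proof.
move=> th01 a1; have a0 := step_gt0 th01; set a := step th in a0 a1 *.
pose k := (Num.floor (- log2 a) + 1)%R.
have k_lo : 0 < log2 a + k%:~R by have := floorD1_gt (- log2 a); rewrite -/k; lra.
have k_hi : log2 a + k%:~R <= 1.
  by have := floor_le (- log2 a); rewrite /k intrD -[1%:~R]/(1 : R); lra.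
have Es : a * 2 `^ k%:~R = 2 `^ (log2 a + k%:~R) by rewrite pow2D pow2_log2.
have s12 : 1 < 2 `^ (log2 a + k%:~R) <= 2.
  by rewrite -[X in X < _](powRr0 2) -[X in _ <= X](@powRr1 _ 2) // ltr_pow2 ler_pow2 k_lo.
have := optR_le_scale th01 a1 s12 Es.
by have := log2_mul_ln2_le (pow2_gt0 (log2 a + k%:~R)); lra.
Qed.

Lemma step_pow2N a : step (2 `^ (- a) : R) = a.
Proof. by rewrite /step log2_pow2 opprK. Qed.

Lemma pow2N_in01 (a : R) : 0 < a -> 0 < 2 `^ (- a) < 1.
Proof. by move=> a0; rewrite pow2_gt0 -[X in _ < X](powRr0 2) ltr_pow2 oppr_lt0. Qed.

Lemma optR_le_pow2 (k : nat) :
  optR (2 `^ (- 2 `^ (- k%:R))) <= 1 + log2 (ln 2) + 2 `^ (- k%:R) :> R.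
Proof.
set a : R := 2 `^ (- k%:R); have a0 : 0 < a by apply: pow2_gt0.
have a1 : step (2 `^ (- a)) <= 1.
  by rewrite step_pow2N /a -[leRHS](powRr0 2) ler_pow2 oppr_le0.
have Es : step (2 `^ (- a)) * 2 `^ (k.+1%:Z)%:~R = 2.
  rewrite step_pow2N -pow2D; suff -> : - k%:R + k.+1%:~R = 1 :> R by rewrite powRr1.
  by rewrite -[k.+1%:~R]/(k.+1%:R : R) -natr1 addrA addNr add0r.
have := optR_le_scale (pow2N_in01 a0) a1 _ Es; rewrite step_pow2N log2M ?posrE ?ln2_gt0 //.
by rewrite log2_2 => /(_ ltac:(lra)); lra.
Qed.

Lemma optR_ge_pow2 (k : nat) : (0 < k)%N ->
  2 - (ln 2)^-1 - 2 `^ (- k%:R) / ln 2 <= optR (2 `^ (- (2 `^ (- k%:R) / ln 2))) :> R.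
Proof.
move=> k0; set a : R := 2 `^ (- k%:R) / ln 2; have l2 := @ln2_gt0 R.
have a0 : 0 < a by rewrite divr_gt0 ?pow2_gt0.
have t12 : 1 <= (ln (2 : R))^-1 < 2.
  rewrite ltW ?invf_gt1 ?ln2_lt1 //= invf_plt ?posrE //.
  by apply: le_lt_trans ln2_gt_half; lra.
have a1 : step (2 `^ (- a)) <= 1.
  rewrite step_pow2N /a ler_pdivrMr // mul1r; apply: le_trans (ltW ln2_gt_half).
  by rewrite -powR_inv1 // ler_pow2 lerN2 ler1n.
have a01 : 0 < step (2 `^ (- a)) <= 1 by rewrite a1 step_pow2N a0.
have := potential_le_of_admissible a01 (optR_admissible (pow2N_in01 a0)).
rewrite step_pow2N {2}/a => /(potential_le_scale (k := k%:Z) t12).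
have := info0_le (pow2N_in01 a0); rewrite step_pow2N /a divfK ?gt_eqF // log2_pow2.
rewrite -[k%:Z%:~R]/(k%:R : R); lra.
Qed.

End Bounds.

Section LimfBounds.
Context {T : choiceType} {X : filteredType T} {R : realType}.
Context (F : set_system X) {FF : Filter F}.
Implicit Types (f g : X -> \bar R) (l : R).
Local Open Scope ereal_scope.

Lemma limf_esup_le f l : (forall e, (0 < e)%R -> \forall x \near F, f x <= (l + e)%:E) ->
  limf_esup f F <= l%:E.
Proof.
move=> near_le; apply/lee_addgt0Pr => e e0; rewrite -EFinD.
apply: ge_ereal_inf; exists (ereal_sup (f @` [set x | f x <= (l + e)%:E])).
  by exists [set x | f x <= (l + e)%:E] => //; apply: near_le.
by apply: ge_ereal_sup => _ [x le_x <-].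
Qed.

Lemma le_limf_esup f l :
  (forall e, (0 < e)%R -> forall V, F V -> exists2 x, V x & (l - e)%:E <= f x) ->
  l%:E <= limf_esup f F.
Proof.
move=> often_ge; apply/lee_subgt0Pr => e e0; rewrite -EFinB.
apply: le_ereal_inf_tmp => _ [V FV <-]; have [x Vx le_x] := often_ge e e0 V FV.
by apply: le_trans le_x _; apply: ereal_sup_ubound; exists x.
Qed.

Lemma le_limf_einf f l : (forall e, (0 < e)%R -> \forall x \near F, (l - e)%:E <= f x) ->
  l%:E <= limf_einf f F.
Proof.
move=> near_ge; rewrite /limf_einf leeNr -EFinN; apply: limf_esup_le => e e0.
by apply: filterS (near_ge e e0) => x; rewrite /= leeNl -EFinN opprD opprK.
Qed.

Lemma limf_einf_le f l :
  (forall e, (0 < e)%R -> forall V, F V -> exists2 x, V x & f x <= (l + e)%:E) ->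
  limf_einf f F <= l%:E.
Proof.
move=> often_le; rewrite /limf_einf leeNl -EFinN; apply: le_limf_esup => e e0 V FV.
have [x Vx le_x] := often_le e e0 V FV; exists x => //.
by rewrite /= leeNr -EFinN opprD !opprK.
Qed.

Lemma limf_esup_near_eq f g : (\forall x \near F, f x = g x) -> limf_esup f F = limf_esup g F.
Proof.
wlog suff: f g / (\forall x \near F, f x = g x) -> limf_esup g F <= limf_esup f F.
  move=> le_fg fg; apply/le_anti; rewrite !le_fg //.
  by apply: filterS fg => x /esym.
move=> fg; apply: le_ereal_inf_tmp => _ [V FV <-].
apply: ge_ereal_inf; exists (ereal_sup (g @` (V `&` [set x | f x = g x]))).
  by exists (V `&` [set x | f x = g x]) => //; apply: filterI.
apply: ge_ereal_sup => _ [x [Vx fgx] <-]; rewrite -fgx.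
by apply: ereal_sup_ubound; exists x.
Qed.

Lemma limf_einf_near_eq f g : (\forall x \near F, f x = g x) -> limf_einf f F = limf_einf g F.
Proof.
move=> fg; rewrite /limf_einf (@limf_esup_near_eq (\- f) (\- g)) //.
by apply: filterS fg => x /= ->.
Qed.

End LimfBounds.

Section Asymptotics.
Context {R : realType}.

Lemma onem_lt_pow2N (a : R) : 0 < a -> 1 - a < 2 `^ (- a).
Proof.
move=> a0; have := expR_ge1Dx (- a * ln 2); rewrite -pow2E.
by have := @ln2_lt1 R; have := @ln2_gt0 R; nra.
Qed.

Lemma near_left1_in01 : \forall th \near (1 : R)^'-, 0 < th < 1.
Proof.
near=> th; apply/andP; split; last by near: th; apply: nbhs_left_lt.
by near: th; apply: nbhs_left_gt.
Unshelve. all: by end_near.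
Qed.

Lemma near_left1_step_lt (d : R) : 0 < d -> \forall th \near 1^'-, step th < d.
Proof.
move=> d0; have /andP[pd0 pd1] := pow2N_in01 d0; near=> th.
have th_gt : 2 `^ (- d) < th by near: th; apply: nbhs_left_gt.
by rewrite /step ltrNl -ltr_pow2 pow2_log2 // (lt_trans pd0 th_gt).
Unshelve. all: by end_near.
Qed.

Lemma left1_pow2N (V : set R) : 1^'- V ->
  exists2 d : R, 0 < d & forall a, 0 < a < d -> V (2 `^ (- a)).
Proof.
move=> /nbhs_ballP[d d0 Vd]; exists d => // a /andP[a0 ad].
have /andP[_ th1] := pow2N_in01 a0; have := onem_lt_pow2N a0.
move=> lt_th; apply: Vd => //.
by rewrite -ball_normE /ball_ /= ger0_norm; lra.
Qed.

Lemma exists_pow2N_lt (e : R) : 0 < e -> exists k : nat, 2 `^ (- k%:R) < e.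
Proof.
move=> e0; have half01 : 0 <= (2^-1 : R) < 1 by rewrite invr_ge0 ler0n invf_lt1 ?ltr1n.
by have [k lt_e] := exists_expr_lt half01 e0; exists k; rewrite pow2_natN.
Qed.

Lemma optR_liminf : limf_einf (fun th => (optR th)%:E) (1 : R)^'- = (1 + log2 (ln 2))%:E.
Proof.
apply/le_anti/andP; split.
- apply: limf_einf_le => e e0 V /left1_pow2N[d d0 Vd].
  have de0 : 0 < Num.min d e by rewrite lt_min d0 e0.
  have [k] := exists_pow2N_lt de0; rewrite lt_min => /andP[lt_d lt_e].
  exists (2 `^ (- 2 `^ (- k%:R))); first by apply: Vd; rewrite pow2_gt0.
  by rewrite /= lee_fin; apply: le_trans (optR_le_pow2 k) _; rewrite lerD2l ltW.
- apply: le_limf_einf => e e0; near=> th.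
  have th01 : 0 < th < 1 by near: th; apply: near_left1_in01.
  have : step th < Num.min e 1.
    by near: th; apply: near_left1_step_lt; rewrite lt_min e0 ltr01.
  rewrite lt_min => /andP[lt_e lt_1]; rewrite lee_fin.
  by apply: le_trans (optR_ge th01 (ltW lt_1)); rewrite lerD2l lerN2 ltW.
Unshelve. all: by end_near.
Qed.

Lemma optR_limsup : limf_esup (fun th => (optR th)%:E) (1 : R)^'- = (2 - (ln 2)^-1)%:E.
Proof.
apply/le_anti/andP; split.
- apply: limf_esup_le => e e0; near=> th.
  have th01 : 0 < th < 1 by near: th; apply: near_left1_in01.
  have : step th < Num.min e 1.
    by near: th; apply: near_left1_step_lt; rewrite lt_min e0 ltr01.
  rewrite lt_min => /andP[lt_e lt_1]; rewrite lee_fin.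
  by apply: le_trans (optR_le_upper th01 (ltW lt_1)) _; rewrite lerD2l ltW.
- apply: le_limf_esup => e e0 V /left1_pow2N[d d0 Vd].
  have de0 : 0 < Num.min d e by rewrite lt_min d0 e0.
  have [k] := exists_pow2N_lt (mulr_gt0 de0 (@ln2_gt0 R)).
  rewrite -ltr_pdivrMr ?ln2_gt0 // lt_min => /andP[lt_d lt_e].
  have a0 : 0 < 2 `^ (- k.+1%:R) / ln 2 :> R by rewrite divr_gt0 ?pow2_gt0 ?ln2_gt0.
  have le_k : 2 `^ (- k.+1%:R) / ln 2 <= 2 `^ (- k%:R) / ln 2 :> R.
    by rewrite ler_pM2r ?invr_gt0 ?ln2_gt0 // ler_pow2 lerN2 ler_nat.
  exists (2 `^ (- (2 `^ (- k.+1%:R) / ln 2))).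
    by apply: Vd; rewrite a0 (le_lt_trans le_k).
  rewrite lee_fin; apply: le_trans (optR_ge_pow2 (ltn0Sn k)).
  by rewrite lerD2l lerN2 ltW // (le_lt_trans le_k).
Unshelve. all: by end_near.
Qed.

Lemma log2_log2_expR1 : log2 (log2 (expR 1 : R)) = - log2 (ln 2).
Proof. by rewrite log2_expR1 /log2 lnV ?posrE ?ln2_gt0 // mulNr. Qed.

End Asymptotics.

Unset Implicit Arguments.

Theorem mainTheorem7 (R : realType) :
  (forall theta : R, 0 < theta < 1 -> exists N, minimax_code theta N) /\
  (forall Nss : R -> nat -> nat,
     (forall theta : R, 0 < theta < 1 -> minimax_code theta (Nss theta)) ->
     limf_einf (fun theta : R => Rstar (Nss theta) (geom theta)) (1 : R)^'-
       = (1 - log2 (log2 (expR (1 : R))))%:E /\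
     limf_esup (fun theta : R => Rstar (Nss theta) (geom theta)) (1 : R)^'-
       = (2 - log2 (expR (1 : R)))%:E).
Proof.
split=> [theta|Nss minN]; first exact: minimax_code_exists.
have near_optR : \forall theta \near (1 : R)^'-,
    Rstar (Nss theta) (geom theta) = (optR theta)%:E.
  near=> theta; have th01 : 0 < theta < 1 by near: theta; apply: near_left1_in01.
  exact: minimax_codeE th01 (minN _ th01).
rewrite (limf_einf_near_eq near_optR) (limf_esup_near_eq near_optR) optR_liminf optR_limsup.
by rewrite log2_log2_expR1 opprK log2_expR1.
Unshelve. all: by end_near.
Qed.
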